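(* Let $A$ be a word-topic matrix, $\delta\ge0$, $B$ a $\delta$-biased minimum variance inverse of $A$, $x^*\in\mathcal{S}_k$, and let $x$ be the output of the Thresholded Linear Inverse algorithm on a document of $n$ words generated from $x^*$. Then with probability at least $1-2/k$: for every $i\in[k]$, if $x^*_i=0$ then $x_i=0$, and if $x^*_i\ge 4\lambda_\delta(A)\sqrt{(\log k)/n}+2\delta$ then $x_i>0$. In particular, if $x^*$ is $r$-sparse, all its nonzero entries are at least $\epsilon/r$ for some $\epsilon>4\delta r$, and $n\ge 64\,\lambda_\delta(A)^2r^2\log k/\epsilon^2$, then with probability at least $1-2/k$ the support of $x$ equals the support of $x^*$.
   Context: A word-topic matrix is a matrix $A\in\mathbb{R}^{D\times k}$ with nonnegative entries whose columns each sum to $1$. $\mathcal{S}_k=\{z\in\mathbb{R}^k_{\ge0}:\sum_i z_i=1\}$. A document of $n$ words generated from $x\in\mathcal{S}_k$ consists of words drawn i.i.d. from the categorical distribution on $[D]$ with probabilities $Ax$; its count vector $y\in\mathbb{R}^D$ records how many times each word occurs. For a matrix $M$, $\|M\|_{\max}=\max_{i,j}|M_{ij}|$. $\lambda_\delta(A)$ is the optimal value of: minimize $\|B\|_{\max}$ over $B\in\mathbb{R}^{k\times D}$ subject to $\|BA-I_k\|_{\max}\le\delta$; a $\delta$-biased minimum variance inverse is a matrix $B$ with $\|BA-I_k\|_{\max}\le\delta$ and $\|B\|_{\max}=\lambda_\delta(A)$. The Thresholded Linear Inverse algorithm, given $y$ and $B$: computes $\hat x=\frac1n By$; sets $\tau=2\lambda_\delta(A)\sqrt{(\log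 k)/n}+\delta$; outputs $x\in\mathbb{R}^k$ with $x_i=0$ if $\hat x_i<\tau$ and $x_i=\hat x_i$ otherwise. A vector is $r$-sparse if it has at most $r$ nonzero entries. *)

From Stdlib Require Import Reals Lra List ClassicalDescription.
Import ListNotations.
Open Scope R_scope.

(* Matrices are functions on indices; only indices i < rows, j < cols matter. *)

Definition sumR (n : nat) (f : nat -> R) : R :=
  fold_right Rplus 0 (map f (seq 0 n)).

(* max-entry norm of an m x n matrix (0 for an empty matrix) *)
Definition maxnorm (m n : nat) (M : nat -> nat -> R) : R :=
  fold_right Rmax 0
    (flat_map (fun i => map (fun j => Rabs (M i j)) (seq 0 n)) (seq 0 m)).

Definition word_topic (D k : nat) (A : nat -> nat -> R) : Prop :=
  (forall i j, (i < D)%nat -> (j < k)%nat -> 0 <= A i j) /\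
  (forall j, (j < k)%nat -> sumR D (fun i => A i j) = 1).

Definition simplex (k : nat) (z : nat -> R) : Prop :=
  (forall i, (i < k)%nat -> 0 <= z i) /\ sumR k z = 1.

Definition matmul (D : nat) (B A : nat -> nat -> R) : nat -> nat -> R :=
  fun i j => sumR D (fun l => B i l * A l j).

Definition idm (i j : nat) : R := if Nat.eqb i j then 1 else 0.

Definition feasible (D k : nat) (A : nat -> nat -> R) (delta : R)
    (B : nat -> nat -> R) : Prop :=
  maxnorm k k (fun i j => matmul D B A i j - idm i j) <= delta.

(* lam is the optimal value lambda_delta(A) of
   min ||B||_max s.t. ||BA - I||_max <= delta  (infimum over feasible B) *)
Definition is_lambda (D k : nat) (A : nat -> nat -> R) (delta lam : R) : Prop :=
  (forall B, feasible D k A delta B -> lam <= maxnorm k D B) /\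
  (forall l, (forall B, feasible D k A delta B -> l <= maxnorm k D B) -> l <= lam).

Definition min_var_inverse (D k : nat) (A : nat -> nat -> R) (delta lam : R)
    (B : nat -> nat -> R) : Prop :=
  feasible D k A delta B /\ maxnorm k D B = lam.

(* Documents of n words over [D]: lists of length n of words < D. *)
Fixpoint all_docs (D n : nat) : list (list nat) :=
  match n with
  | O => [[]]
  | S n' => flat_map (fun w => map (fun j => j :: w) (seq 0 D)) (all_docs D n')
  end.

Definition doc_prob (p : nat -> R) (w : list nat) : R :=
  fold_right Rmult 1 (map p w).

Definition indic (P : Prop) : R :=
  if excluded_middle_informative P then 1 else 0.

(* probability that a document of n words drawn i.i.d. from p satisfies E *)
Definition Prob (D n : nat) (p : nat -> R) (E : list nat -> Prop) : R :=
  fold_right Rplus 0 (map (fun w => doc_prob p w * indic (E w)) (all_docs D n)).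

Definition word_dist (D k : nat) (A : nat -> nat -> R) (x : nat -> R) : nat -> R :=
  fun l => sumR k (fun j => A l j * x j).

Definition counts (w : list nat) : nat -> R :=
  fun l => INR (count_occ Nat.eq_dec w l).

Definition TLI (D k n : nat) (B : nat -> nat -> R) (lam delta : R)
    (w : list nat) : nat -> R :=
  let xhat := fun i => / INR n * sumR D (fun l => B i l * counts w l) in
  let tau := 2 * lam * sqrt (ln (INR k) / INR n) + delta in
  fun i => if Rlt_dec (xhat i) tau then 0 else xhat i.

Definition nnz (k : nat) (z : nat -> R) : nat :=
  length (filter (fun i => if Req_EM_T (z i) 0 then false else true) (seq 0 k)).

Definition sparse (k r : nat) (z : nat -> R) : Prop := (nnz k z <= r)%nat.

(* The estimate xhat_i = (1/n) (B y)_i is the average of n i.i.d. variables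
   bounded by lam = ||B||_max, with mean (B A x* )_i within delta of x*_i.
   Hoeffding's inequality bounds each one-sided deviation of size
   t = 2 lam sqrt (log k / n) by exp (- n t^2 / (2 lam^2)) = 1/k^2, so a union
   bound over both sides and the k coordinates leaves failure probability 2/k.
   Away from these deviations the threshold tau = t + delta lies above xhat_i
   when x*_i = 0 and below it when x*_i >= 2 t + 2 delta; for the support
   statement the condition on n gives 2 t + 2 delta <= eps / r. *)

From Stdlib Require Import Reals List Lra Lia Classical.
From Coquelicot Require Import Coquelicot.
Open Scope R_scope.

Definition lsum {A : Type} (L : list A) (f : A -> R) : R :=
  fold_right Rplus 0 (map f L).

Definition lprod {A : Type} (L : list A) (f : A -> R) : R :=
  fold_right Rmult 1 (map f L).

Lemma lsum_app {A : Type} (L1 L2 : list A) f : lsum (L1 ++ L2) f = lsum L1 f + lsum L2 f.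
Proof.
  unfold lsum; induction L1 as [|x L1 IH]; cbn; [lra|]. rewrite IH; lra.
Qed.

Lemma lsum_plus {A : Type} (L : list A) f g :
  lsum L (fun x => f x + g x) = lsum L f + lsum L g.
Proof. unfold lsum; induction L as [|x L IH]; cbn; [lra|]. rewrite IH; lra. Qed.

Lemma lsum_scal {A : Type} (L : list A) c f : lsum L (fun x => c * f x) = c * lsum L f.
Proof. unfold lsum; induction L as [|x L IH]; cbn; [lra|]. rewrite IH; lra. Qed.

Lemma lsum_le {A : Type} (L : list A) f g :
  (forall x, In x L -> f x <= g x) -> lsum L f <= lsum L g.
Proof.
  unfold lsum; induction L as [|x L IH]; intros H; cbn; [lra|].
  apply Rplus_le_compat; [apply H; now left|].
  apply IH; intros y Hy; apply H; now right.
Qed.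

Lemma lsum_ext {A : Type} (L : list A) f g :
  (forall x, In x L -> f x = g x) -> lsum L f = lsum L g.
Proof. intros H; apply Rle_antisym; apply lsum_le; intros x Hx; rewrite H; auto; lra. Qed.

Lemma lsum_flat_map {A B : Type} (L : list A) (F : A -> list B) f :
  lsum (flat_map F L) f = lsum L (fun x => lsum (F x) f).
Proof.
  induction L as [|x L IH]; [reflexivity|].
  simpl flat_map. rewrite lsum_app, IH. reflexivity.
Qed.

Lemma lsum_map {A B : Type} (L : list A) (g : A -> B) f :
  lsum (map g L) f = lsum L (fun x => f (g x)).
Proof. unfold lsum; now rewrite map_map. Qed.

Lemma sumR_lsum n f : sumR n f = lsum (seq 0 n) f.
Proof. reflexivity. Qed.

Lemma sumR_S n f : sumR (S n) f = sumR n f + f n.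
Proof. rewrite !sumR_lsum, seq_S, lsum_app; cbn; lra. Qed.

Lemma sumR_le n f g : (forall i, (i < n)%nat -> f i <= g i) -> sumR n f <= sumR n g.
Proof. intros H; apply lsum_le; intros i Hi%in_seq; apply H; lia. Qed.

Lemma sumR_ext n f g : (forall i, (i < n)%nat -> f i = g i) -> sumR n f = sumR n g.
Proof. intros H; apply lsum_ext; intros i Hi%in_seq; apply H; lia. Qed.

Lemma sumR_plus n f g : sumR n (fun i => f i + g i) = sumR n f + sumR n g.
Proof. apply lsum_plus. Qed.

Lemma sumR_scal n c f : sumR n (fun i => c * f i) = c * sumR n f.
Proof. apply lsum_scal. Qed.

Lemma sumR_const n c : sumR n (fun _ => c) = INR n * c.
Proof. induction n as [|n IH]; [cbn; lra|]. rewrite sumR_S, IH, S_INR; lra. Qed.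

Lemma sumR_nonneg n f : (forall i, (i < n)%nat -> 0 <= f i) -> 0 <= sumR n f.
Proof.
  intros H. replace 0 with (sumR n (fun _ => 0)) by (rewrite sumR_const; lra).
  now apply sumR_le.
Qed.

Lemma sumR_ge_term n f i :
  (forall j, (j < n)%nat -> 0 <= f j) -> (i < n)%nat -> f i <= sumR n f.
Proof.
  induction n as [|n IH]; intros H Hi; [lia|]. rewrite sumR_S.
  assert (0 <= sumR n f) by (apply sumR_nonneg; intros; apply H; lia).
  destruct (Nat.eq_dec i n) as [->|Hne]; [lra|].
  assert (f i <= sumR n f) by (apply IH; [intros; apply H|]; lia).
  assert (0 <= f n) by (apply H; lia). lra.
Qed.

Lemma sumR_swap n m F :
  sumR n (fun i => sumR m (fun j => F i j)) = sumR m (fun j => sumR n (fun i => F i j)).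
Proof.
  induction n as [|n IH].
  - cbn; rewrite (sumR_const m 0); lra.
  - rewrite sumR_S, IH, <- sumR_plus. apply sumR_ext; intros; now rewrite sumR_S.
Qed.

Lemma sumR_abs n f : Rabs (sumR n f) <= sumR n (fun i => Rabs (f i)).
Proof.
  induction n as [|n IH]; [cbn; rewrite Rabs_R0; lra|].
  rewrite !sumR_S. eapply Rle_trans; [apply Rabs_triang|lra].
Qed.

Lemma sumR_kronecker n i f : (i < n)%nat -> sumR n (fun j => idm i j * f j) = f i.
Proof.
  unfold idm. induction n as [|n IH]; intros Hi; [lia|]. rewrite sumR_S.
  destruct (Nat.eq_dec i n) as [->|Hne].
  - rewrite Nat.eqb_refl, (sumR_ext n _ (fun _ => 0)), sumR_const; [lra|].
    intros j Hj. destruct (Nat.eqb_spec n j); [lia|lra].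
  - rewrite IH by lia. destruct (Nat.eqb_spec i n); [lia|lra].
Qed.

Lemma maxnorm_ge m n M i j :
  (i < m)%nat -> (j < n)%nat -> Rabs (M i j) <= maxnorm m n M.
Proof.
  intros Hi Hj. unfold maxnorm.
  assert (Hin : In (Rabs (M i j))
    (flat_map (fun i => map (fun j => Rabs (M i j)) (seq 0 n)) (seq 0 m))).
  { apply in_flat_map. exists i. split; [apply in_seq; lia|].
    apply in_map_iff. exists j. split; [reflexivity|apply in_seq; lia]. }
  revert Hin. generalize (flat_map (fun i => map (fun j => Rabs (M i j)) (seq 0 n)) (seq 0 m)).
  intros L. induction L as [|x L IH]; cbn; [tauto|].
  intros [<-|Hin]; [apply Rmax_l|]. eapply Rle_trans; [apply IH, Hin|apply Rmax_r].
Qed.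

Lemma maxnorm_nonneg m n M : 0 <= maxnorm m n M.
Proof.
  unfold maxnorm. generalize (flat_map (fun i => map (fun j => Rabs (M i j)) (seq 0 n)) (seq 0 m)).
  intros L. induction L as [|x L IH]; cbn; [lra|]. eapply Rle_trans; [apply IH|apply Rmax_r].
Qed.

Lemma word_dist_simplex D k A x :
  word_topic D k A -> simplex k x -> simplex D (word_dist D k A x).
Proof.
  intros [HA0 HA1] [Hx0 Hx1]. unfold word_dist. split.
  - intros l Hl. apply sumR_nonneg. intros j Hj. apply Rmult_le_pos; auto.
  - rewrite sumR_swap, <- Hx1. apply sumR_ext. intros j Hj.
    rewrite (sumR_ext D _ (fun l => x j * A l j)) by (intros; lra).
    rewrite sumR_scal, HA1 by exact Hj. lra.
Qed.

Lemma word_dist_mean D k A x b :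
  sumR D (fun l => word_dist D k A x l * b l)
  = sumR k (fun j => sumR D (fun l => b l * A l j) * x j).
Proof.
  unfold word_dist, matmul.
  rewrite (sumR_ext D _ (fun l => sumR k (fun j => b l * A l j * x j))).
  - rewrite sumR_swap. apply sumR_ext. intros j _.
    rewrite <- (Rmult_comm (x j)), <- sumR_scal. apply sumR_ext. intros; lra.
  - intros l _. rewrite Rmult_comm, <- sumR_scal. apply sumR_ext. intros; lra.
Qed.

Lemma row_mean_close D k A B delta x i :
  feasible D k A delta B -> simplex k x -> (i < k)%nat ->
  Rabs (sumR D (fun l => word_dist D k A x l * B i l) - x i) <= delta.
Proof.
  intros Hfeas [Hx0 Hx1] Hi.
  assert (Hdiff : sumR D (fun l => word_dist D k A x l * B i l) - x i
                  = sumR k (fun j => (matmul D B A i j - idm i j) * x j)).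
  { rewrite word_dist_mean.
    rewrite (sumR_ext k (fun j => (matmul D B A i j - idm i j) * x j)
               (fun j => matmul D B A i j * x j + -1 * (idm i j * x j))) by (intros; ring).
    rewrite sumR_plus, sumR_scal, sumR_kronecker by exact Hi. unfold matmul; ring. }
  rewrite Hdiff, <- (Rmult_1_r delta), <- Hx1, <- sumR_scal.
  eapply Rle_trans; [apply sumR_abs|]. apply sumR_le. intros j Hj.
  rewrite Rabs_mult, (Rabs_pos_eq (x j)) by auto. apply Rmult_le_compat_r; [auto|].
  eapply Rle_trans; [|exact Hfeas].
  exact (maxnorm_ge k k (fun i j => matmul D B A i j - idm i j) i j Hi Hj).
Qed.

Lemma all_docs_lt D n w : In w (all_docs D n) -> forall x, In x w -> (x < D)%nat.
Proof.
  revert w; induction n as [|n IH]; cbn; intros w Hw.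
  - destruct Hw as [<-|[]]; cbn; tauto.
  - apply in_flat_map in Hw as [w' [Hw' Hm]]. apply in_map_iff in Hm as [j [<- Hj%in_seq]].
    intros x [<-|Hx]; [lia|exact (IH w' Hw' x Hx)].
Qed.

Lemma indic_true (P : Prop) : P -> indic P = 1.
Proof.
  intros H; unfold indic. destruct (ClassicalDescription.excluded_middle_informative _); tauto.
Qed.

Lemma indic_false (P : Prop) : ~ P -> indic P = 0.
Proof.
  intros H; unfold indic. destruct (ClassicalDescription.excluded_middle_informative _); tauto.
Qed.

Lemma indic_bounds (P : Prop) : 0 <= indic P <= 1.
Proof. destruct (classic P) as [H|H]; [rewrite indic_true|rewrite indic_false]; auto; lra. Qed.

Section DocumentProbability.

Variables (D n : nat) (p : nat -> R).
Hypothesis p_simplex : simplex D p.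

Lemma Prob_lsum (E : list nat -> Prop) :
  Prob D n p E = lsum (all_docs D n) (fun w => doc_prob p w * indic (E w)).
Proof. reflexivity. Qed.

Lemma sum_docs_lprod g :
  lsum (all_docs D n) (fun w => doc_prob p w * lprod w g) = (sumR D (fun l => p l * g l)) ^ n.
Proof.
  induction n as [|m IH]; [cbn; lra|]. cbn [all_docs]. rewrite lsum_flat_map.
  rewrite (lsum_ext _ _ (fun w => sumR D (fun l => p l * g l) * (doc_prob p w * lprod w g))).
  - rewrite lsum_scal, IH. cbn; ring.
  - intros w _. rewrite lsum_map, Rmult_comm, <- sumR_scal. apply lsum_ext. intros l _.
    unfold doc_prob, lprod; cbn; ring.
Qed.

Lemma sum_doc_prob : lsum (all_docs D n) (doc_prob p) = 1.
Proof.
  destruct p_simplex as [_ Hp1].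
  rewrite (lsum_ext _ _ (fun w => doc_prob p w * lprod w (fun _ => 1))).
  - rewrite sum_docs_lprod, (sumR_ext D _ p), Hp1 by (intros; lra). apply pow1.
  - intros w _. replace (lprod w (fun _ => 1)) with 1; [ring|].
    unfold lprod; induction w as [|x w IH]; cbn; lra.
Qed.

Lemma doc_prob_nonneg w : In w (all_docs D n) -> 0 <= doc_prob p w.
Proof.
  intros Hw. pose proof (all_docs_lt D n w Hw) as Hlt. clear Hw.
  destruct p_simplex as [Hp0 _]. unfold doc_prob.
  induction w as [|x w IH]; cbn; [lra|].
  apply Rmult_le_pos; [apply Hp0, Hlt; now left|apply IH; intros y Hy; apply Hlt; now right].
Qed.

Lemma Prob_le_expect (E : list nat -> Prop) (f : list nat -> R) :
  (forall w, In w (all_docs D n) -> 0 <= f w) ->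
  (forall w, In w (all_docs D n) -> E w -> 1 <= f w) ->
  Prob D n p E <= lsum (all_docs D n) (fun w => doc_prob p w * f w).
Proof.
  intros Hf0 Hf1. apply lsum_le. intros w Hw. apply Rmult_le_compat_l; [now apply doc_prob_nonneg|].
  destruct (classic (E w)) as [H|H]; [rewrite indic_true|rewrite indic_false]; auto.
Qed.

Lemma Prob_mono (E F : list nat -> Prop) :
  (forall w, In w (all_docs D n) -> E w -> F w) -> Prob D n p E <= Prob D n p F.
Proof.
  intros H. apply Prob_le_expect; [intros; apply indic_bounds|].
  intros w Hw HE. rewrite indic_true by auto. lra.
Qed.

Lemma Prob_False : Prob D n p (fun _ => False) = 0.
Proof.
  rewrite Prob_lsum, (lsum_ext _ _ (fun w => 0 * 0)), lsum_scal; [ring|].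
  intros w _. rewrite indic_false by auto. ring.
Qed.

Lemma Prob_compl (E : list nat -> Prop) :
  Prob D n p E = 1 - Prob D n p (fun w => ~ E w).
Proof.
  rewrite !Prob_lsum, (lsum_ext _ _ (fun w => doc_prob p w + -1 * (doc_prob p w * indic (~ E w)))).
  - rewrite lsum_plus, lsum_scal, sum_doc_prob. ring.
  - intros w _. destruct (classic (E w)) as [H|H].
    + rewrite indic_true, indic_false by auto. ring.
    + rewrite indic_false, indic_true by auto. ring.
Qed.

Lemma Prob_or_le (E F : list nat -> Prop) :
  Prob D n p (fun w => E w \/ F w) <= Prob D n p E + Prob D n p F.
Proof.
  rewrite (Prob_lsum E), (Prob_lsum F), <- lsum_plus.
  rewrite (lsum_ext _ (fun w => _ + _) (fun w => doc_prob p w * (indic (E w) + indic (F w))))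
    by (intros; ring).
  apply Prob_le_expect.
  - intros w _. pose proof (indic_bounds (E w)). pose proof (indic_bounds (F w)). lra.
  - intros w _ [H|H]; [rewrite (indic_true (E w)) by auto|rewrite (indic_true (F w)) by auto];
      [pose proof (indic_bounds (F w))|pose proof (indic_bounds (E w))]; lra.
Qed.

Lemma Prob_exists_le (m : nat) (E : nat -> list nat -> Prop) :
  Prob D n p (fun w => exists i, (i < m)%nat /\ E i w) <= sumR m (fun i => Prob D n p (E i)).
Proof.
  induction m as [|m IH].
  - change (sumR 0 _) with 0. rewrite <- Prob_False.
    apply Prob_mono. intros w _ [i [Hi _]]; lia.
  - rewrite sumR_S. eapply Rle_trans; [|apply Rplus_le_compat_r, IH].
    eapply Rle_trans; [|apply Prob_or_le]. apply Prob_mono.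
    intros w _ [i [Hi HE]]. destruct (Nat.eq_dec i m) as [->|Hne]; [now right|].
    left. exists i. split; [lia|exact HE].
Qed.

End DocumentProbability.

Lemma le_of_derive_nonneg (f df : R -> R) (a : R) :
  (forall x, is_derive f x (df x)) -> (forall x, 0 <= x -> 0 <= df x) ->
  0 <= a -> f 0 <= f a.
Proof.
  intros Hd Hdf Ha.
  destruct (MVT_gen f 0 a df) as [c [Hc Heq]].
  - intros x _. apply Hd.
  - intros x _. apply continuity_pt_filterlim, (@ex_derive_continuous R_AbsRing R_NormedModule).
    eexists; apply Hd.
  - rewrite Rmin_left, Rmax_right in Hc by lra.
    assert (0 <= df c * (a - 0)) by (apply Rmult_le_pos; [apply Hdf|]; lra). lra.
Qed.

(* Moment generating function of a {-1, 1}-valued variable with mean m. *)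
Definition two_point_mgf (m u : R) : R := (1 + m) / 2 * exp u + (1 - m) / 2 * exp (- u).

Definition two_point_mgf_deriv (m u : R) : R := (1 + m) / 2 * exp u - (1 - m) / 2 * exp (- u).

Lemma two_point_mgf_pos m u : -1 <= m <= 1 -> 0 < two_point_mgf m u.
Proof.
  intros Hm. unfold two_point_mgf. pose proof (exp_pos u). pose proof (exp_pos (- u)).
  assert (0 <= (1 + m) / 2 * exp u) by (apply Rmult_le_pos; lra).
  assert (0 <= (1 - m) / 2 * exp (- u)) by (apply Rmult_le_pos; lra).
  destruct (Rle_lt_dec 0 m).
  - assert (0 < (1 + m) / 2 * exp u) by (apply Rmult_lt_0_compat; lra). lra.
  - assert (0 < (1 - m) / 2 * exp (- u)) by (apply Rmult_lt_0_compat; lra). lra.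
Qed.

Lemma two_point_mgf_sq_sub m u :
  two_point_mgf m u ^ 2 - two_point_mgf_deriv m u ^ 2 = 1 - m ^ 2.
Proof.
  unfold two_point_mgf, two_point_mgf_deriv.
  assert (Hinv : exp u * exp (- u) = 1) by (rewrite <- exp_plus, Rplus_opp_r; apply exp_0).
  transitivity ((1 + m) * (1 - m) * (exp u * exp (- u))); [field|]. rewrite Hinv; ring.
Qed.

(* For h = two_point_mgf m: (h'/h)' = (h^2 - h'^2) / h^2 = (1 - m^2) / h^2 <= 1,
   and h'/h = m at 0. *)
Lemma two_point_log_deriv_le m u :
  -1 <= m <= 1 -> 0 <= u -> two_point_mgf_deriv m u / two_point_mgf m u <= m + u.
Proof.
  intros Hm Hu.
  set (K := fun v => m + v - two_point_mgf_deriv m v / two_point_mgf m v).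
  assert (HK : forall v, is_derive K v (1 - (1 - m ^ 2) / two_point_mgf m v ^ 2)).
  { intros v. unfold K. rewrite <- (two_point_mgf_sq_sub m v).
    pose proof (two_point_mgf_pos m v Hm). unfold two_point_mgf, two_point_mgf_deriv in *.
    auto_derive; [lra|field; lra]. }
  assert (HK0 : K 0 = 0).
  { unfold K, two_point_mgf, two_point_mgf_deriv. rewrite Ropp_0, exp_0. field; lra. }
  assert (K 0 <= K u); [|unfold K in *; lra].
  apply (le_of_derive_nonneg K _ u HK); auto. intros v _.
  pose proof (two_point_mgf_pos m v Hm). pose proof (two_point_mgf_sq_sub m v).
  assert ((1 - m ^ 2) / two_point_mgf m v ^ 2 <= 1); [|lra].
  apply Rle_div_l; [nra|]. nra.
Qed.

(* two_point_mgf m u / exp (m u + u^2/2) is nonincreasing for u >= 0. *)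
Lemma hoeffding_two_point m a :
  -1 <= m <= 1 -> 0 <= a -> two_point_mgf m a <= exp (m * a + a ^ 2 / 2).
Proof.
  intros Hm Ha.
  set (G := fun u => - (two_point_mgf m u * exp (- (m * u + u ^ 2 / 2)))).
  assert (HG : forall u, is_derive G u
     ((two_point_mgf m u * (m + u) - two_point_mgf_deriv m u) * exp (- (m * u + u ^ 2 / 2)))).
  { intros u. unfold G, two_point_mgf, two_point_mgf_deriv. auto_derive; [auto|].
    replace (u * (u * 1) * / 2) with (u ^ 2 / 2) by field. field. }
  assert (HG0 : G 0 = -1).
  { unfold G, two_point_mgf. replace (- (m * 0 + 0 ^ 2 / 2)) with 0 by field.
    rewrite Ropp_0, exp_0. field. }
  assert (HGa : G 0 <= G a).
  { apply (le_of_derive_nonneg G _ a HG); auto. intros u Hu.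
    apply Rmult_le_pos; [|apply Rlt_le, exp_pos].
    pose proof (two_point_mgf_pos m u Hm) as Hpos.
    pose proof (two_point_log_deriv_le m u Hm Hu) as Hlog.
    apply Rle_div_l in Hlog; [nra|lra]. }
  rewrite HG0 in HGa. unfold G in HGa. rewrite exp_Ropp in HGa.
  set (E := exp (m * a + a ^ 2 / 2)) in *.
  assert (HE : 0 < E) by apply exp_pos.
  assert (Hq : two_point_mgf m a * / E * E <= 1 * E) by (apply Rmult_le_compat_r; lra).
  rewrite Rmult_assoc, Rinv_l, Rmult_1_r, Rmult_1_l in Hq by lra. exact Hq.
Qed.

Lemma exp_tangent_le p z : exp z * (1 + p - z) <= exp p.
Proof.
  replace (exp p) with (exp z * exp (p - z)) by (rewrite <- exp_plus; f_equal; ring).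
  apply Rmult_le_compat_l; [apply Rlt_le, exp_pos|]. pose proof (exp_ineq1_le (p - z)); lra.
Qed.

(* Convexity of exp: on [-a, a] it lies below its chord. *)
Lemma exp_le_two_point_mgf a y : -1 <= y <= 1 -> exp (a * y) <= two_point_mgf y a.
Proof.
  intros Hy. unfold two_point_mgf.
  pose proof (exp_tangent_le a (a * y)). pose proof (exp_tangent_le (- a) (a * y)).
  replace (exp (a * y)) with ((1 + y) / 2 * (exp (a * y) * (1 + a - a * y))
                             + (1 - y) / 2 * (exp (a * y) * (1 + - a - a * y))) by field.
  apply Rplus_le_compat; apply Rmult_le_compat_l; lra.
Qed.

Lemma sumR_two_point_mgf D p c a :
  simplex D p ->
  sumR D (fun l => p l * two_point_mgf (c l) a) = two_point_mgf (sumR D (fun l => p l * c l)) a.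
Proof.
  intros [_ Hp1]. unfold two_point_mgf.
  rewrite (sumR_ext D _ (fun l => (exp a + exp (- a)) / 2 * p l
                                + (exp a - exp (- a)) / 2 * (p l * c l))) by (intros; field).
  rewrite sumR_plus, !sumR_scal, Hp1. field.
Qed.

Lemma mean_abs_le D p b lam :
  simplex D p -> (forall l, (l < D)%nat -> Rabs (b l) <= lam) ->
  Rabs (sumR D (fun l => p l * b l)) <= lam.
Proof.
  intros [Hp0 Hp1] Hb. eapply Rle_trans; [apply sumR_abs|].
  rewrite <- (Rmult_1_l lam), <- Hp1, Rmult_comm, <- sumR_scal. apply sumR_le. intros l Hl.
  rewrite Rabs_mult, Rabs_pos_eq, Rmult_comm by auto. apply Rmult_le_compat_r; auto.
Qed.

Lemma hoeffding_mgf D p b lam s :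
  simplex D p -> (forall l, (l < D)%nat -> Rabs (b l) <= lam) -> 0 < lam -> 0 <= s ->
  sumR D (fun l => p l * exp (s * b l))
  <= exp (s * sumR D (fun l => p l * b l) + s ^ 2 * lam ^ 2 / 2).
Proof.
  intros Hp Hb Hlam Hs.
  assert (Hunit : forall z, Rabs z <= lam -> -1 <= z / lam <= 1).
  { intros z Hz%Rabs_le_between. split; [apply Rle_div_r|apply Rle_div_l]; lra. }
  eapply Rle_trans.
  - apply (sumR_le D _ (fun l => p l * two_point_mgf (b l / lam) (s * lam))).
    intros l Hl. apply Rmult_le_compat_l; [apply Hp, Hl|].
    replace (s * b l) with (s * lam * (b l / lam)) by (field; lra).
    apply exp_le_two_point_mgf, Hunit, Hb, Hl.
  - rewrite sumR_two_point_mgf by exact Hp.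
    rewrite (sumR_ext D _ (fun l => / lam * (p l * b l))), sumR_scal by (intros; field; lra).
    replace (s * sumR D (fun l => p l * b l) + s ^ 2 * lam ^ 2 / 2)
      with (/ lam * sumR D (fun l => p l * b l) * (s * lam) + (s * lam) ^ 2 / 2) by (field; lra).
    apply hoeffding_two_point; [|apply Rmult_le_pos; lra].
    rewrite Rmult_comm. apply Hunit, (mean_abs_le D p b lam Hp Hb).
Qed.

Lemma exp_lsum {A : Type} s (w : list A) (b : A -> R) :
  exp (s * lsum w b) = lprod w (fun x => exp (s * b x)).
Proof.
  unfold lsum, lprod. induction w as [|x w IH]; cbn; [rewrite Rmult_0_r; apply exp_0|].
  rewrite <- IH, <- exp_plus. f_equal; ring.
Qed.

Lemma exp_pow x n : exp x ^ n = exp (INR n * x).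
Proof.
  induction n as [|n IH]; cbn [pow]; [rewrite Rmult_0_l, exp_0; reflexivity|].
  rewrite IH, <- exp_plus, S_INR. f_equal; ring.
Qed.

Lemma chernoff_hoeffding D n p b lam t :
  simplex D p -> (forall l, (l < D)%nat -> Rabs (b l) <= lam) -> 0 < lam -> 0 <= t ->
  Prob D n p (fun w => INR n * (sumR D (fun l => p l * b l) + t) <= lsum w b)
  <= exp (- (INR n * t ^ 2 / (2 * lam ^ 2))).
Proof.
  intros Hp Hb Hlam Ht.
  set (mu := sumR D (fun l => p l * b l)).
  set (s := t / lam ^ 2).
  assert (Hs : 0 <= s) by (apply Rle_div_r; [apply pow_lt|]; lra).
  eapply Rle_trans.
  { apply (Prob_le_expect D n p Hp _ (fun w => exp (s * (lsum w b - INR n * (mu + t))))).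
    - intros; apply Rlt_le, exp_pos.
    - intros w _ Hw. pose proof (exp_ineq1_le (s * (lsum w b - INR n * (mu + t)))).
      assert (0 <= s * (lsum w b - INR n * (mu + t))) by (apply Rmult_le_pos; lra). lra. }
  rewrite (lsum_ext _ _ (fun w => exp (- (s * (INR n * (mu + t))))
                                  * (doc_prob p w * lprod w (fun l => exp (s * b l))))).
  2:{ intros w _. rewrite <- exp_lsum, Rmult_minus_distr_l. unfold Rminus.
      rewrite exp_plus, Ropp_mult_distr_r. ring. }
  rewrite lsum_scal, sum_docs_lprod.
  eapply Rle_trans.
  { apply Rmult_le_compat_l; [apply Rlt_le, exp_pos|].
    apply pow_incr. split.
    - apply sumR_nonneg. intros l Hl. apply Rmult_le_pos; [apply Hp, Hl|apply Rlt_le, exp_pos].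
    - exact (hoeffding_mgf D p b lam s Hp Hb Hlam Hs). }
  rewrite exp_pow, <- exp_plus. apply Req_le. f_equal. unfold s, mu. field. lra.
Qed.

Lemma sumR_counts D b w :
  (forall x, In x w -> (x < D)%nat) -> sumR D (fun l => b l * counts w l) = lsum w b.
Proof.
  induction w as [|x w IH]; intros Hw.
  - rewrite (sumR_ext D _ (fun _ => 0)), sumR_const by (intros; unfold counts; cbn; ring).
    cbn; ring.
  - rewrite (sumR_ext D _ (fun l => b l * counts w l + idm x l * b l)).
    + rewrite sumR_plus, sumR_kronecker, IH by (intros; apply Hw; cbn; auto).
      change (lsum (x :: w) b) with (b x + lsum w b); ring.
    + intros l _. unfold counts, idm; cbn.
      destruct (Nat.eq_dec x l) as [->|Hne]; [rewrite Nat.eqb_refl, S_INR; ring|].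
      destruct (Nat.eqb_spec x l); [contradiction|ring].
Qed.

Definition estimate (D n : nat) (B : nat -> nat -> R) (w : list nat) (i : nat) : R :=
  / INR n * sumR D (fun l => B i l * counts w l).

Definition deviation (k n : nat) (lam : R) : R := 2 * lam * sqrt (ln (INR k) / INR n).

Lemma TLI_nonzero D k n B lam delta w i :
  TLI D k n B lam delta w i <> 0 -> deviation k n lam + delta <= estimate D n B w i.
Proof.
  unfold TLI, estimate, deviation; cbv zeta.
  destruct (Rlt_dec _ _) as [_|H]; [tauto|]. intros _; lra.
Qed.

Lemma TLI_not_pos D k n B lam delta w i :
  0 <= deviation k n lam + delta -> ~ TLI D k n B lam delta w i > 0 ->
  estimate D n B w i <= deviation k n lam + delta.
Proof.
  unfold TLI, estimate, deviation; cbv zeta.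
  destruct (Rlt_dec _ _) as [H|_]; lra.
Qed.

Lemma estimate_lsum D n B w i :
  In w (all_docs D n) -> estimate D n B w i = / INR n * lsum w (B i).
Proof.
  intros Hw. unfold estimate. rewrite sumR_counts; [reflexivity|exact (all_docs_lt D n w Hw)].
Qed.

Lemma deviation_tail k n lam :
  (0 < k)%nat -> (0 < n)%nat -> 0 < lam ->
  exp (- (INR n * deviation k n lam ^ 2 / (2 * lam ^ 2))) = / INR k ^ 2.
Proof.
  intros Hk Hn Hlam. apply le_INR in Hk. apply lt_0_INR in Hn. cbn in Hk.
  assert (Hln : 0 <= ln (INR k) / INR n).
  { apply Rle_div_r; [lra|]. rewrite Rmult_0_l, <- ln_1. apply ln_le; lra. }
  unfold deviation. rewrite !Rpow_mult_distr, pow2_sqrt by exact Hln.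
  replace (INR n * (2 ^ 2 * lam ^ 2 * (ln (INR k) / INR n)) / (2 * lam ^ 2))
    with (ln (INR k) + ln (INR k)) by (field; lra).
  rewrite exp_Ropp, exp_plus, exp_ln by lra. f_equal; ring.
Qed.

(* A zero row i of B gives (BA)_ii = 0, an error of 1 on the diagonal. *)
Lemma feasible_zero_row D k A delta B i :
  feasible D k A delta B -> (i < k)%nat -> (forall l, (l < D)%nat -> B i l = 0) -> 1 <= delta.
Proof.
  intros Hfeas Hi HB. eapply Rle_trans; [|exact Hfeas].
  eapply Rle_trans; [|exact (maxnorm_ge k k (fun i j => matmul D B A i j - idm i j) i i Hi Hi)].
  unfold matmul, idm. rewrite Nat.eqb_refl, (sumR_ext D _ (fun _ => 0)), sumR_const
    by (intros l Hl; rewrite HB by exact Hl; ring).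
  rewrite Rmult_0_r, Rminus_0_l, Rabs_Ropp, Rabs_R1. lra.
Qed.

Lemma simplex_dim_pos k x : simplex k x -> (0 < k)%nat.
Proof. intros [_ Hx1]. destruct k; [cbn in Hx1; lra|lia]. Qed.

Lemma nnz_zero k z : nnz k z = 0%nat -> forall i, (i < k)%nat -> z i = 0.
Proof.
  intros H i Hi. unfold nnz in H. apply length_zero_iff_nil in H.
  destruct (Req_EM_T (z i) 0) as [E|E]; [exact E|exfalso].
  assert (Hin : In i (filter (fun i => if Req_EM_T (z i) 0 then false else true) (seq 0 k))).
  { apply filter_In. split; [apply in_seq; lia|]. now destruct (Req_EM_T (z i) 0). }
  now rewrite H in Hin.
Qed.

Lemma sparse_simplex_pos k r x : simplex k x -> sparse k r x -> (0 < r)%nat.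
Proof.
  intros [_ Hx1] Hsp. destruct r as [|r]; [exfalso|lia].
  assert (Hz : nnz k x = 0%nat) by (unfold sparse in Hsp; lia).
  rewrite (sumR_ext k x (fun _ => 0)), sumR_const in Hx1 by exact (nnz_zero k x Hz). lra.
Qed.

Lemma threshold_le_min_entry k n r lam delta eps :
  (0 < k)%nat -> (0 < n)%nat -> (0 < r)%nat -> 0 <= lam -> 0 <= delta ->
  eps > 4 * delta * INR r ->
  INR n >= 64 * lam ^ 2 * INR r ^ 2 * ln (INR k) / eps ^ 2 ->
  4 * lam * sqrt (ln (INR k) / INR n) + 2 * delta <= eps / INR r.
Proof.
  intros Hk Hn Hr Hlam Hdelta Heps Hsize.
  apply le_INR in Hk, Hr. apply lt_0_INR in Hn. cbn in Hk, Hr.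
  assert (Heps0 : 0 < eps) by nra.
  set (q := sqrt (ln (INR k) / INR n)).
  assert (Hq0 : 0 <= q) by apply sqrt_pos.
  assert (Hq2 : q ^ 2 = ln (INR k) / INR n).
  { apply pow2_sqrt, Rle_div_r; [lra|]. rewrite Rmult_0_l, <- ln_1. apply ln_le; lra. }
  assert (Hsq : (8 * lam * INR r * q) ^ 2 <= eps ^ 2).
  { rewrite !Rpow_mult_distr, Hq2.
    apply Rge_le, (Rmult_le_compat_l (eps ^ 2 / INR n)) in Hsize; [|apply Rle_div_r; nra].
    replace (eps ^ 2 / INR n * INR n) with (eps ^ 2) in Hsize by (field; lra).
    replace (eps ^ 2 / INR n * (64 * lam ^ 2 * INR r ^ 2 * ln (INR k) / eps ^ 2))
      with (8 ^ 2 * lam ^ 2 * INR r ^ 2 * (ln (INR k) / INR n)) in Hsize by (field; lra).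
    exact Hsize. }
  assert (Hq : 8 * lam * INR r * q <= eps).
  { assert (0 <= 8 * lam * INR r * q) by (apply Rmult_le_pos; [|exact Hq0]; nra). nra. }
  apply Rle_div_r; [lra|]. nra.
Qed.

Section CoordinateFailure.

Variables (D k n : nat) (A B : nat -> nat -> R) (delta lam : R) (xs : nat -> R).
Hypotheses (A_word_topic : word_topic D k A) (B_inverse : min_var_inverse D k A delta lam B)
  (xs_simplex : simplex k xs) (n_pos : (0 < n)%nat).

Let p := word_dist D k A xs.

Let p_simplex : simplex D p := word_dist_simplex D k A xs A_word_topic xs_simplex.

Let B_feasible : feasible D k A delta B := proj1 B_inverse.

Let B_entry_bound i l : (i < k)%nat -> (l < D)%nat -> Rabs (B i l) <= lam.
Proof. intros Hi Hl. rewrite <- (proj2 B_inverse). now apply maxnorm_ge. Qed.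

Let delta_nonneg : 0 <= delta.
Proof. exact (Rle_trans _ _ _ (maxnorm_nonneg _ _ _) B_feasible). Qed.

Definition coordinate_good (w : list nat) (i : nat) : Prop :=
  (xs i = 0 -> TLI D k n B lam delta w i = 0) /\
  (xs i >= 4 * lam * sqrt (ln (INR k) / INR n) + 2 * delta -> TLI D k n B lam delta w i > 0).

Lemma coordinate_good_lam0 w i : lam = 0 -> (i < k)%nat -> coordinate_good w i.
Proof.
  intros Hlam0 Hi.
  assert (HB0 : forall l, (l < D)%nat -> B i l = 0).
  { intros l Hl. apply Rabs_eq_0. pose proof (B_entry_bound i l Hi Hl).
    pose proof (Rabs_pos (B i l)). lra. }
  pose proof (feasible_zero_row D k A delta B i B_feasible Hi HB0).
  assert (Hxi : xs i <= 1)
    by (destruct xs_simplex as [Hx0 Hx1]; rewrite <- Hx1; now apply sumR_ge_term).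
  split.
  - intros _. apply NNPP. intros HT%TLI_nonzero.
    assert (Hest : estimate D n B w i = 0).
    { unfold estimate. rewrite (sumR_ext D _ (fun _ => 0)), sumR_const
        by (intros l Hl; rewrite HB0 by exact Hl; ring). ring. }
    unfold deviation in HT. rewrite Hlam0, Hest in HT. lra.
  - intros Hx. exfalso. rewrite Hlam0 in Hx. lra.
Qed.

(* A failure at coordinate i forces the empirical mean of B i over the document
   to deviate from its expectation mu by at least the deviation radius, upwards
   (false positive, using mu <= delta) or downwards (missed entry, using
   mu >= xs i - delta). *)
Lemma coordinate_bad_tails w i :
  0 < lam -> (i < k)%nat -> In w (all_docs D n) -> ~ coordinate_good w i ->
  INR n * (sumR D (fun l => p l * B i l) + deviation k n lam) <= lsum w (B i) \/
  INR n * (sumR D (fun l => p l * (-1 * B i l)) + deviation k n lam)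
    <= lsum w (fun l => -1 * B i l).
Proof.
  intros Hlam Hi Hw Hbad. unfold coordinate_good in Hbad. pose proof delta_nonneg.
  pose proof (row_mean_close D k A B delta xs i B_feasible xs_simplex Hi) as Hmu.
  apply Rabs_le_between in Hmu. fold p in Hmu.
  rewrite (sumR_ext D (fun l => p l * (-1 * B i l)) (fun l => -1 * (p l * B i l)))
    by (intros; ring).
  rewrite sumR_scal, lsum_scal.
  set (mu := sumR D (fun l => p l * B i l)) in *.
  replace (4 * lam * sqrt (ln (INR k) / INR n)) with (2 * deviation k n lam) in Hbad
    by (unfold deviation; ring).
  set (t := deviation k n lam) in *.
  assert (Ht : 0 <= t) by (apply Rmult_le_pos; [lra|apply sqrt_pos]).
  assert (Hsum : lsum w (B i) = INR n * estimate D n B w i).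
  { rewrite estimate_lsum by exact Hw. apply lt_0_INR in n_pos. field; lra. }
  rewrite Hsum. apply lt_0_INR in n_pos.
  destruct (classic (xs i = 0 -> TLI D k n B lam delta w i = 0)) as [Hzero|Hzero].
  - right. assert (Hx : xs i >= 2 * t + 2 * delta) by (apply NNPP; tauto).
    assert (HT : ~ TLI D k n B lam delta w i > 0) by tauto.
    apply TLI_not_pos in HT; fold t in HT |- *; [nra|lra].
  - left. assert (Hx0 : xs i = 0) by tauto.
    assert (HT : TLI D k n B lam delta w i <> 0) by tauto.
    apply TLI_nonzero in HT. fold t in HT. apply Rmult_le_compat_l; lra.
Qed.

Lemma coordinate_failure_le i :
  (i < k)%nat -> Prob D n p (fun w => ~ coordinate_good w i) <= 2 / INR k ^ 2.
Proof.
  intros Hi. pose proof (simplex_dim_pos k xs xs_simplex) as Hk.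
  assert (Hk2 : 0 < INR k ^ 2) by (apply pow_lt, lt_0_INR, Hk).
  destruct (Req_dec lam 0) as [Hlam0|Hlam0].
  - apply Rle_trans with (Prob D n p (fun _ => False));
      [|rewrite Prob_False; apply Rle_div_r; lra].
    apply (Prob_mono D n p p_simplex). intros w _ Hbad.
    exact (Hbad (coordinate_good_lam0 w i Hlam0 Hi)).
  - assert (Hlam : 0 < lam) by (pose proof (maxnorm_nonneg k D B); destruct B_inverse; lra).
    assert (Ht : 0 <= deviation k n lam) by (apply Rmult_le_pos; [lra|apply sqrt_pos]).
    eapply Rle_trans.
    { eapply Rle_trans; [|apply (Prob_or_le D n p p_simplex)]. apply (Prob_mono D n p p_simplex).
      intros w Hw Hbad. exact (coordinate_bad_tails w i Hlam Hi Hw Hbad). }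
    unfold Rdiv. rewrite <- (deviation_tail k n lam) by auto.
    set (tail := exp (- (INR n * deviation k n lam ^ 2 / (2 * lam ^ 2)))).
    replace (2 * tail) with (tail + tail) by ring.
    apply Rplus_le_compat; apply (chernoff_hoeffding D n p _ lam _ p_simplex); auto;
      intros l Hl; rewrite ?Rabs_mult, ?Rabs_m1, ?Rmult_1_l; now apply B_entry_bound.
Qed.

Lemma TLI_correct_prob :
  Prob D n p (fun w => forall i, (i < k)%nat -> coordinate_good w i) >= 1 - 2 / INR k.
Proof.
  assert (Hk : 0 < INR k) by apply lt_0_INR, (simplex_dim_pos k xs xs_simplex).
  rewrite (Prob_compl D n p p_simplex). apply Rle_ge, Rplus_le_compat_l, Ropp_le_contravar.
  eapply Rle_trans; [apply (Prob_mono D n p p_simplex)|].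
  { intros w _ Hbad. apply not_all_ex_not in Hbad as [i Hbad].
    apply imply_to_and in Hbad. exact (ex_intro _ i Hbad). }
  eapply Rle_trans; [apply (Prob_exists_le D n p p_simplex)|].
  eapply Rle_trans; [apply (sumR_le k _ (fun _ => 2 / INR k ^ 2)), coordinate_failure_le|].
  rewrite sumR_const. apply Req_le. field. lra.
Qed.

End CoordinateFailure.

Theorem corollary4p3
  (D k n : nat) (A B : nat -> nat -> R) (delta lam : R) (xs : nat -> R) :
  word_topic D k A ->
  0 <= delta ->
  is_lambda D k A delta lam ->
  min_var_inverse D k A delta lam B ->
  simplex k xs ->
  (0 < n)%nat ->
  Prob D n (word_dist D k A xs)
    (fun w => forall i, (i < k)%nat ->
       (xs i = 0 -> TLI D k n B lam delta w i = 0) /\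
       (xs i >= 4 * lam * sqrt (ln (INR k) / INR n) + 2 * delta ->
          TLI D k n B lam delta w i > 0))
    >= 1 - 2 / INR k
  /\
  (forall (r : nat) (eps : R),
     sparse k r xs ->
     (forall i, (i < k)%nat -> xs i <> 0 -> xs i >= eps / INR r) ->
     eps > 4 * delta * INR r ->
     INR n >= 64 * lam ^ 2 * INR r ^ 2 * ln (INR k) / eps ^ 2 ->
     Prob D n (word_dist D k A xs)
       (fun w => forall i, (i < k)%nat ->
          (TLI D k n B lam delta w i <> 0 <-> xs i <> 0))
       >= 1 - 2 / INR k).
Proof.
  intros HA Hdelta _ HB Hx Hn.
  pose proof (TLI_correct_prob D k n A B delta lam xs HA HB Hx Hn) as Hcorrect.
  split; [exact Hcorrect|].
  intros r eps Hsparse Hmin Heps Hsize.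
  assert (Hthr : 4 * lam * sqrt (ln (INR k) / INR n) + 2 * delta <= eps / INR r).
  { apply threshold_le_min_entry; auto.
    - exact (simplex_dim_pos k xs Hx).
    - exact (sparse_simplex_pos k r xs Hx Hsparse).
    - destruct HB as [_ <-]. apply maxnorm_nonneg. }
  eapply Rge_trans; [|exact Hcorrect].
  apply Rle_ge, (Prob_mono D n _ (word_dist_simplex D k A xs HA Hx)).
  intros w _ Hgood i Hi. destruct (Hgood i Hi) as [Hzero Hpos]. split.
  - intros HT Hx0. exact (HT (Hzero Hx0)).
  - intros Hx0. specialize (Hpos (Rle_ge _ _ (Rle_trans _ _ _ Hthr (Rge_le _ _ (Hmin i Hi Hx0))))).
    lra.
Qed.
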